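(* There is a pseudo-double functor $\mathbb{O}\mathbf{rg}\to\mathbb{E}\mathbf{ff}^{\mathrm{el}}$ which is the identity on objects and vertical morphisms and is fully faithful on the category of horizontal morphisms and squares, with essential image the linear elementary effects handlers (those whose carrier is of the form $S\mathcal{y}$ for a set $S$). On horizontal morphisms it is given, for each set $S$, by the natural bijection between $[q,p]$-coalgebra structures $S\to[q,p]\triangleleft S$ and polynomial maps $S\mathcal{y}\triangleleft q\to p\triangleleft S\mathcal{y}$.
   Context: Polynomials $p=\sum_{I\in p(1)}\mathcal{y}^{p[I]}$ form $\mathbf{Poly}$ (morphisms are natural transformations: $\phi_1\colon p(1)\to q(1)$ and $\phi^\#_I\colon q[\phi_1I]\to p[I]$), with composition $\triangleleft$ and Dirichlet tensor $\otimes$ ($(p\otimes q)(1)=p(1)\times q(1)$, $(p\otimes q)[I,J]=p[I]\times q[J]$, unit $\mathcal{y}$). A set $S$ is identified with the constant polynomial, and $S\mathcal{y}$ is the linear polynomial with positions $S$ and one direction each. The closure of $\otimes$ is $[q,p]\coloneqq\sum_{\phi\colon q\to p}\mathcal{y}^{\sum_{I\in q(1)}p[\phi_1I]}$, with $(-\otimes q)\dashv[q,-]$; a $[q,p]$-coalgebra is a set $S$ with a function $\vartheta\colon S\to[q,p]\triangleleft S$. The double category $\mathbb{O}\mathbf{rg}$ has objects polynomials, vertical morphisms polynomial maps, horizontal morphisms from $q$ to $p$ the $[q,p]$-coalgebras (composed by taking the product of state sets and using the canonical maps $([q,p]\triangleleft T)\otimes([r,q]\triangleleft S)\to([q,p]\otimes[r,q])\triangleleft(T\times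 S)\to[r,p]\triangleleft(T\times S)$), and squares from $(S,\vartheta)$ (from $q$ to $p$) to $(S',\vartheta')$ (from $q'$ to $p'$) over $\psi\colon q\to q'$, $\varphi\colon p\to p'$ the functions $f\colon S\to S'$ with $([q,p']\triangleleft f)\circ([q,\varphi]\triangleleft S)\circ\vartheta=([\psi,p']\triangleleft S')\circ\vartheta'\circ f$. Elementary effects handlers: for polynomials $p,q$, a $(p,q)$-effects handler is a polynomial $s$ with a morphism $\varphi\colon s\triangleleft q\to p\triangleleft s$; it is linear if $s=S\mathcal{y}$. $\mathbb{E}\mathbf{ff}^{\mathrm{el}}$ is the pseudo-double category with objects polynomials, vertical morphisms polynomial maps, horizontal morphisms from $q$ to $p$ the $(p,q)$-effects handlers, composite of $(s,\varphi)$ (a $(p,q)$-handler) and $(t,\psi)$ (a $(q,r)$-handler) given by $s\triangleleft t$ with structure map $(\varphi\triangleleft t)\circ(s\triangleleft\psi)$, and squares over $\psi\colon q\to q'$, $\varphi\colon p\to p'$ the maps $\gamma\colon s\to s'$ with $(\varphi\triangleleft\gamma)\circ\vartheta=\vartheta'\circ(\gamma\triangleleft\psi)$. *)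

Set Implicit Arguments.

Record poly : Type := Poly { pos : Type; dir : pos -> Type }.
Arguments Poly : clear implicits.

(** A morphism (natural transformation) p -> q: phi_1 on positions,
    phi^# backwards on directions. *)
Record pmap (p q : poly) : Type := PMap {
  on_pos : pos p -> pos q;
  on_dir : forall i : pos p, dir q (on_pos i) -> dir p i }.
Arguments PMap : clear implicits.
Arguments on_pos {p q} _ _.
Arguments on_dir {p q} _ _ _.

Definition pid (p : poly) : pmap p p :=
  PMap p p (fun i => i) (fun i d => d).

Definition pcomp {p q r : poly} (g : pmap q r) (f : pmap p q) : pmap p r :=
  PMap p r (fun i => on_pos g (on_pos f i))
           (fun i d => on_dir f i (on_dir g (on_pos f i) d)).

Definition pinvertible {p q : poly} (f : pmap p q) : Prop :=
  exists g : pmap q p, pcomp g f = pid p /\ pcomp f g = pid q.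

(** A set S as a constant polynomial, and the linear polynomial S y. *)
Definition pconst (S : Type) : poly := Poly S (fun _ => Empty_set).
Definition plin (S : Type) : poly := Poly S (fun _ => unit).
Definition py : poly := plin unit.

Definition pconst_map {S S' : Type} (f : S -> S') : pmap (pconst S) (pconst S') :=
  PMap (pconst S) (pconst S') f (fun _ e => match e with end).

(** * Composition product p <| q *)
Definition tri (p q : poly) : poly :=
  Poly {i : pos p & dir p i -> pos q}
       (fun x => {d : dir p (projT1 x) & dir q (projT2 x d)}).

Definition tri_map {p p' q q' : poly} (f : pmap p p') (g : pmap q q')
  : pmap (tri p q) (tri p' q') :=
  PMap (tri p q) (tri p' q')
    (fun x => existT (fun i => dir p' i -> pos q') (on_pos f (projT1 x))
                (fun d' => on_pos g (projT2 x (on_dir f (projT1 x) d'))))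
    (fun x e => existT (fun d => dir q (projT2 x d))
                  (on_dir f (projT1 x) (projT1 e)) (on_dir g _ (projT2 e))).

(** canonical associator and unitors of <| (the paper treats <| as strictly
    associative and unital; in type theory these are the canonical isos) *)
Definition assoc (a b c : poly) : pmap (tri (tri a b) c) (tri a (tri b c)) :=
  PMap (tri (tri a b) c) (tri a (tri b c))
   (fun x => existT (fun i => dir a i -> pos (tri b c)) (projT1 (projT1 x))
      (fun d => existT (fun j => dir b j -> pos c) (projT2 (projT1 x) d)
                  (fun e => projT2 x (existT _ d e))))
   (fun x w => existT (fun de => dir c (projT2 x de))
                 (existT _ (projT1 w) (projT1 (projT2 w))) (projT2 (projT2 w))).

Definition assoc_inv (a b c : poly) : pmap (tri a (tri b c)) (tri (tri a b) c) :=
  PMap (tri a (tri b c)) (tri (tri a b) c)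
   (fun y => existT (fun x : pos (tri a b) => dir (tri a b) x -> pos c)
       (existT (fun i => dir a i -> pos b) (projT1 y) (fun d => projT1 (projT2 y d)))
       (fun de => projT2 (projT2 y (projT1 de)) (projT2 de)))
   (fun y w => existT _ (projT1 (projT1 w))
                 (existT _ (projT2 (projT1 w)) (projT2 w))).

Definition lunit (p : poly) : pmap (tri py p) p :=
  PMap (tri py p) p (fun x => projT2 x tt) (fun x d => existT _ tt d).
Definition lunit_inv (p : poly) : pmap p (tri py p) :=
  PMap p (tri py p) (fun i => existT (fun _ : unit => unit -> pos p) tt (fun _ => i))
    (fun i w => projT2 w).
Definition runit (p : poly) : pmap (tri p py) p :=
  PMap (tri p py) p (fun x => projT1 x) (fun x d => existT _ d tt).
Definition runit_inv (p : poly) : pmap p (tri p py) :=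
  PMap p (tri p py) (fun i => existT (fun j => dir p j -> unit) i (fun _ => tt))
    (fun i w => projT1 w).

(** * Internal hom [q,p] = sum_{phi : q -> p} y^{sum_I p[phi_1 I]} *)
Definition hom (q p : poly) : poly :=
  Poly (pmap q p) (fun phi => {I : pos q & dir p (on_pos phi I)}).

Definition hom_r {q p p' : poly} (phi : pmap p p') : pmap (hom q p) (hom q p') :=
  PMap (hom q p) (hom q p') (fun chi => pcomp phi chi)
    (fun chi e => existT _ (projT1 e) (on_dir phi _ (projT2 e))).

Definition hom_l {q q' p : poly} (psi : pmap q q') : pmap (hom q' p) (hom q p) :=
  PMap (hom q' p) (hom q p) (fun chi => pcomp chi psi)
    (fun chi e => existT _ (on_pos psi (projT1 e)) (projT2 e)).

(** horizontal morphism from q to p: a [q,p]-coalgebra *)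
Record coalg (q p : poly) : Type := Coalg {
  st : Type;
  coal : st -> pos (tri (hom q p) (pconst st)) }.
Arguments Coalg {q p} st coal.
Arguments st {q p} _.
Arguments coal {q p} _ _.

Definition org_square {q p q' p' : poly} (psi : pmap q q') (phi : pmap p p')
    (c : coalg q p) (c' : coalg q' p') (f : st c -> st c') : Prop :=
  (fun s => on_pos (tri_map (pid (hom q p')) (pconst_map f))
             (on_pos (tri_map (hom_r phi) (pid (pconst (st c)))) (coal c s)))
  = (fun s => on_pos (tri_map (hom_l psi) (pid (pconst (st c')))) (coal c' (f s))).

(** horizontal composite: (T,psi) from q to p after (S,theta) from r to q,
    via ([q,p]<|T) (x) ([r,q]<|S) -> ([q,p](x)[r,q])<|(TxS) -> [r,p]<|(TxS) *)
Definition org_hcomp {r q p : poly} (c1 : coalg q p) (c2 : coalg r q) : coalg r p :=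
  Coalg (st c1 * st c2)%type (fun ts =>
    existT (fun chi : pmap r p => {I : pos r & dir p (on_pos chi I)} -> (st c1 * st c2)%type)
      (pcomp (projT1 (coal c1 (fst ts))) (projT1 (coal c2 (snd ts))))
      (fun e =>
         (projT2 (coal c1 (fst ts))
            (existT _ (on_pos (projT1 (coal c2 (snd ts))) (projT1 e)) (projT2 e)),
          projT2 (coal c2 (snd ts))
            (existT _ (projT1 e)
               (on_dir (projT1 (coal c1 (fst ts))) _ (projT2 e)))))).

Definition org_unit (q : poly) : coalg q q :=
  Coalg unit (fun _ => existT (fun chi : pmap q q => {I : pos q & dir q (on_pos chi I)} -> unit)
                         (pid q) (fun _ => tt)).

Definition org_assoc {A B C : Type} (x : (A * B) * C) : A * (B * C) :=
  (fst (fst x), (snd (fst x), snd x)).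

(** horizontal morphism from q to p: a (p,q)-effects handler *)
Record handler (p q : poly) : Type := Handler {
  car : poly;
  hstr : pmap (tri car q) (tri p car) }.
Arguments Handler {p q} car hstr.
Arguments car {p q} _.
Arguments hstr {p q} _.

Definition is_linear {p q : poly} (h : handler p q) : Prop :=
  exists (S : Type) (b : pmap (car h) (plin S)), pinvertible b.

Definition eff_square {q p q' p' : poly} (psi : pmap q q') (phi : pmap p p')
    (h : handler p q) (h' : handler p' q') (g : pmap (car h) (car h')) : Prop :=
  pcomp (tri_map phi g) (hstr h) = pcomp (hstr h') (tri_map g psi).

(** composite of (s,phi) a (p,q)-handler and (t,psi) a (q,r)-handler:
    s<|t with structure (phi<|t) o (s<|psi) (modulo associators) *)
Definition eff_hcomp {p q r : poly} (h1 : handler p q) (h2 : handler q r)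
  : handler p r :=
  Handler (tri (car h1) (car h2))
    (pcomp (assoc p (car h1) (car h2))
     (pcomp (tri_map (hstr h1) (pid (car h2)))
      (pcomp (assoc_inv (car h1) q (car h2))
       (pcomp (tri_map (pid (car h1)) (hstr h2))
              (assoc (car h1) (car h2) r))))).

(** horizontal unit: y with y <| q = q = q <| y *)
Definition eff_unit (q : poly) : handler q q :=
  Handler py (pcomp (runit_inv q) (lunit q)).

Definition transpose {q p : poly} {S : Type}
    (th : S -> pos (tri (hom q p) (pconst S)))
  : pmap (tri (plin S) q) (tri p (plin S)) :=
  PMap (tri (plin S) q) (tri p (plin S))
   (fun x => existT (fun i => dir p i -> S)
       (on_pos (projT1 (th (projT1 x))) (projT2 x tt))
       (fun d => projT2 (th (projT1 x)) (existT _ (projT2 x tt) d)))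
   (fun x w => existT (fun u => dir q (projT2 x u)) tt
       (on_dir (projT1 (th (projT1 x))) (projT2 x tt) (projT1 w))).

Definition Fh {q p : poly} (c : coalg q p) : handler p q :=
  Handler (plin (st c)) (transpose (coal c)).

(** * Pseudo-double functor structure extending Fh (identity on objects and
    vertical morphisms): action on squares and comparison cells. *)
Record pdf_data : Type := PDF {
  Fsq : forall (q p q' p' : poly) (psi : pmap q q') (phi : pmap p p')
          (c : coalg q p) (c' : coalg q' p') (f : st c -> st c'),
          pmap (car (Fh c)) (car (Fh c'));
  Fmu : forall (r q p : poly) (c1 : coalg q p) (c2 : coalg r q),
          pmap (car (eff_hcomp (Fh c1) (Fh c2))) (car (Fh (org_hcomp c1 c2)));
  Feta : forall q : poly, pmap (car (eff_unit q)) (car (Fh (org_unit q))) }.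
Arguments Fsq _ {q p q' p'} psi phi c c' f.
Arguments Fmu _ {r q p} c1 c2.
Arguments Feta _ q.

Definition is_pseudo_double_functor (F : pdf_data) : Prop :=
  (forall q p q' p' (psi : pmap q q') (phi : pmap p p') c c' f,
     org_square psi phi c c' f -> eff_square psi phi (Fh c) (Fh c') (Fsq F psi phi c c' f))
  /\ (forall q p q' p' q'' p'' (psi : pmap q q') (phi : pmap p p')
        (psi' : pmap q' q'') (phi' : pmap p' p'') c c' c'' f g,
        org_square psi phi c c' f -> org_square psi' phi' c' c'' g ->
        Fsq F (pcomp psi' psi) (pcomp phi' phi) c c'' (fun s => g (f s))
        = pcomp (Fsq F psi' phi' c' c'' g) (Fsq F psi phi c c' f))
  /\ (forall q p (c : coalg q p),
        Fsq F (pid q) (pid p) c c (fun s => s) = pid (car (Fh c)))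
  /\ (forall r q p (c1 : coalg q p) (c2 : coalg r q),
        eff_square (pid r) (pid p) (eff_hcomp (Fh c1) (Fh c2)) (Fh (org_hcomp c1 c2))
                   (Fmu F c1 c2)
        /\ pinvertible (Fmu F c1 c2))
  /\ (forall q, eff_square (pid q) (pid q) (eff_unit q) (Fh (org_unit q)) (Feta F q)
                /\ pinvertible (Feta F q))
  /\ (forall r q p r' q' p' (chi : pmap r r') (psi : pmap q q') (phi : pmap p p')
        (c1 : coalg q p) (c1' : coalg q' p') (c2 : coalg r q) (c2' : coalg r' q')
        f1 f2,
        org_square psi phi c1 c1' f1 -> org_square chi psi c2 c2' f2 ->
        pcomp (Fmu F c1' c2') (tri_map (Fsq F psi phi c1 c1' f1) (Fsq F chi psi c2 c2' f2))
        = pcomp (Fsq F chi phi (org_hcomp c1 c2) (org_hcomp c1' c2')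
                   (fun ts => (f1 (fst ts), f2 (snd ts))))
                (Fmu F c1 c2))
  /\ (forall q q' (psi : pmap q q'),
        pcomp (Feta F q') (pid py)
        = pcomp (Fsq F psi psi (org_unit q) (org_unit q') (fun u => u)) (Feta F q))
  /\ (forall s r q p (c1 : coalg q p) (c2 : coalg r q) (c3 : coalg s r),
        pcomp (Fsq F (pid s) (pid p) (org_hcomp (org_hcomp c1 c2) c3)
                   (org_hcomp c1 (org_hcomp c2 c3)) org_assoc)
              (pcomp (Fmu F (org_hcomp c1 c2) c3)
                     (tri_map (Fmu F c1 c2) (pid (car (Fh c3)))))
        = pcomp (Fmu F c1 (org_hcomp c2 c3))
                (pcomp (tri_map (pid (car (Fh c1))) (Fmu F c2 c3))
                       (assoc (car (Fh c1)) (car (Fh c2)) (car (Fh c3)))))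
  /\ (forall q p (c : coalg q p),
        pcomp (Fsq F (pid q) (pid p) (org_hcomp (org_unit p) c) c (fun x => snd x))
              (pcomp (Fmu F (org_unit p) c) (tri_map (Feta F p) (pid (car (Fh c)))))
        = lunit (car (Fh c)))
  /\ (forall q p (c : coalg q p),
        pcomp (Fsq F (pid q) (pid p) (org_hcomp c (org_unit q)) c (fun x => fst x))
              (pcomp (Fmu F c (org_unit q)) (tri_map (pid (car (Fh c))) (Feta F q)))
        = runit (car (Fh c))).

Definition fully_faithful_on_squares (F : pdf_data) : Prop :=
  forall q p q' p' (psi : pmap q q') (phi : pmap p p') (c : coalg q p) (c' : coalg q' p'),
    (forall f g, org_square psi phi c c' f -> org_square psi phi c c' g ->
       Fsq F psi phi c c' f = Fsq F psi phi c c' g -> f = g)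
    /\ (forall gm, eff_square psi phi (Fh c) (Fh c') gm ->
          exists f, org_square psi phi c c' f /\ Fsq F psi phi c c' f = gm).

Definition in_essential_image {p q : poly} (h : handler p q) : Prop :=
  exists (q0 p0 : poly) (c : coalg q0 p0) (psi : pmap q0 q) (phi : pmap p0 p)
         (a : pmap (car (Fh c)) (car h)),
    eff_square psi phi (Fh c) h a /\ pinvertible psi /\ pinvertible phi /\ pinvertible a.

(** The functor Org -> Eff^el is the identity on objects and vertical maps and
    sends a [q,p]-coalgebra (S, th) to the handler (S y, mate th), where
    [mate th : S y <| q -> p <| S y] is the transpose of th under the
    adjunction (- (x) q) -| [q,-].  We first prove, for maps
    S -> [q,p] <| T with independent S and T, that [mate] is a bijection and
    is definitionally natural in p, T (post-composition) and q, S
    (pre-composition).  Hence f : S -> S' is an Org-square iff [lin_map f] is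
    an Eff^el-square, which gives the action on squares and full faithfulness.
    The comparison cells and coherence laws hold because maps out of
    polynomials with subsingleton directions (S y, S y <| T y, y) are
    determined by their positions.  Finally a handler with carrier isomorphic
    to S y is realised, up to that isomorphism, by [unmate] of its transported
    structure map. *)
From Stdlib Require Import FunctionalExtensionality.

Lemma pmap_ext {p q : poly} (f g : pmap p q) :
  (forall i, existT (fun j => dir q j -> dir p i) (on_pos f i) (on_dir f i)
           = existT (fun j => dir q j -> dir p i) (on_pos g i) (on_dir g i)) -> f = g.
Proof.
  intro H.
  assert (E : (fun i => existT (fun j => dir q j -> dir p i) (on_pos f i) (on_dir f i))
            = (fun i => existT (fun j => dir q j -> dir p i) (on_pos g i) (on_dir g i)))
    by (apply functional_extensionality_dep; exact H).
  apply (f_equal (fun F : forall i, {j : pos q & dir q j -> dir p i} =>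
            PMap p q (fun i => projT1 (F i)) (fun i => projT2 (F i)))) in E.
  destruct f, g; exact E.
Qed.

Definition dir_subsingleton (p : poly) : Prop :=
  forall (i : pos p) (d d' : dir p i), d = d'.

Lemma plin_dir_subsingleton (S : Type) : dir_subsingleton (plin S).
Proof. intros s [] []; reflexivity. Qed.

Lemma tri_dir_subsingleton (p q : poly) :
  dir_subsingleton p -> dir_subsingleton q -> dir_subsingleton (tri p q).
Proof.
  intros Hp Hq [i k] [d e] [d' e']; simpl in *.
  destruct (Hp i d d'). f_equal. apply Hq.
Qed.

(** Out of such a polynomial, a map is determined by its action on positions,
    since the backward direction components have no choice left. *)
Lemma pmap_eq_of_on_pos {p q : poly} (f g : pmap p q) :
  dir_subsingleton p -> (forall i, on_pos f i = on_pos g i) -> f = g.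
Proof.
  intros Hp H. destruct f as [f0 f1], g as [g0 g1]; simpl in H.
  assert (E : f0 = g0) by (apply functional_extensionality; exact H).
  subst g0. f_equal.
  apply functional_extensionality_dep; intro i.
  apply functional_extensionality; intro d. apply Hp.
Qed.

Ltac prove_dir_subsingleton :=
  repeat apply tri_dir_subsingleton; apply plin_dir_subsingleton.

Definition lin_map {S T : Type} (f : S -> T) : pmap (plin S) (plin T) :=
  PMap (plin S) (plin T) f (fun _ _ => tt).

Lemma lin_map_on_pos {S T : Type} (g : pmap (plin S) (plin T)) :
  g = lin_map (on_pos g).
Proof.
  apply pmap_eq_of_on_pos; [apply plin_dir_subsingleton | reflexivity].
Qed.

Lemma tri_map_id (p q : poly) : tri_map (pid p) (pid q) = pid (tri p q).
Proof.
  apply pmap_ext; intros [i k]; simpl. f_equal.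
  apply functional_extensionality; intros [d e]; reflexivity.
Qed.

Lemma tri_map_comp {p p' p'' q q' q'' : poly} (f : pmap p p') (f' : pmap p' p'')
    (g : pmap q q') (g' : pmap q' q'') :
  tri_map (pcomp f' f) (pcomp g' g) = pcomp (tri_map f' g') (tri_map f g).
Proof. reflexivity. Qed.

Lemma pcomp_assoc {p q r s : poly} (f : pmap p q) (g : pmap q r) (h : pmap r s) :
  pcomp h (pcomp g f) = pcomp (pcomp h g) f.
Proof. reflexivity. Qed.

Lemma pcomp_id_l {p q : poly} (f : pmap p q) : pcomp (pid q) f = f.
Proof. destruct f; reflexivity. Qed.

(** [mate th] is [transpose th] with independent source and target state sets. *)
Definition mate {q p : poly} {S T : Type} (th : S -> pos (tri (hom q p) (pconst T)))
  : pmap (tri (plin S) q) (tri p (plin T)) :=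
  PMap (tri (plin S) q) (tri p (plin T))
   (fun x => existT (fun i => dir p i -> T)
       (on_pos (projT1 (th (projT1 x))) (projT2 x tt))
       (fun d => projT2 (th (projT1 x)) (existT _ (projT2 x tt) d)))
   (fun x w => existT (fun u => dir q (projT2 x u)) tt
       (on_dir (projT1 (th (projT1 x))) (projT2 x tt) (projT1 w))).

Lemma transpose_is_mate {q p : poly} {S : Type}
    (th : S -> pos (tri (hom q p) (pconst S))) :
  transpose th = mate th.
Proof. reflexivity. Qed.

(** The inverse: at state s, the map q -> p is read off at the positions
    (s, fun _ => I) of S y <| q. *)
Definition unmate {q p : poly} {S T : Type}
    (g : pmap (tri (plin S) q) (tri p (plin T))) : S -> pos (tri (hom q p) (pconst T)) :=
  fun s =>
  existT (fun chi : pmap q p => {I : pos q & dir p (on_pos chi I)} -> T)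
   (PMap q p (fun I => projT1 (on_pos g (existT (fun _ : S => unit -> pos q) s (fun _ => I))))
      (fun I d => projT2 (on_dir g (existT (fun _ : S => unit -> pos q) s (fun _ => I))
                    (existT _ d tt))))
   (fun e => projT2 (on_pos g (existT (fun _ : S => unit -> pos q) s (fun _ => projT1 e)))
               (projT2 e)).

Lemma unmate_mate {q p : poly} {S T : Type} (th : S -> pos (tri (hom q p) (pconst T))) :
  unmate (mate th) = th.
Proof.
  apply functional_extensionality; intro s. unfold unmate; simpl.
  destruct (th s) as [[c1 c2] K]; simpl.
  f_equal. apply functional_extensionality; intros [I d]; reflexivity.
Qed.

Lemma mate_unmate {q p : poly} {S T : Type} (g : pmap (tri (plin S) q) (tri p (plin T))) :
  mate (unmate g) = g.
Proof.
  apply pmap_ext; intros [s k].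
  assert (Hk : k = fun _ => k tt)
    by (apply functional_extensionality; intros []; reflexivity).
  rewrite Hk. generalize (k tt) as I. intro I. simpl.
  generalize (on_dir g (existT (fun _ : S => unit -> pos q) s (fun _ => I))).
  destruct (on_pos g (existT (fun _ : S => unit -> pos q) s (fun _ => I))) as [j h]; simpl.
  intro o. f_equal. apply functional_extensionality; intros [d []].
  cbn. destruct (o (existT _ d tt)) as [[] e]; reflexivity.
Qed.

Lemma mate_inj {q p : poly} {S T : Type} (th th' : S -> pos (tri (hom q p) (pconst T))) :
  mate th = mate th' -> th = th'.
Proof.
  intro E. rewrite <- (unmate_mate th), <- (unmate_mate th'), E. reflexivity.
Qed.

Lemma mate_natural_codomain {q p p' : poly} {S T T' : Type}
    (phi : pmap p p') (f : T -> T') (th : S -> pos (tri (hom q p) (pconst T))) :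
  pcomp (tri_map phi (lin_map f)) (mate th)
  = mate (fun s => on_pos (tri_map (pid (hom q p')) (pconst_map f))
                     (on_pos (tri_map (hom_r phi) (pid (pconst T))) (th s))).
Proof. reflexivity. Qed.

Lemma mate_natural_domain {q q' p : poly} {S S' T : Type}
    (psi : pmap q q') (f : S -> S') (th : S' -> pos (tri (hom q' p) (pconst T))) :
  pcomp (mate th) (tri_map (lin_map f) psi)
  = mate (fun s => on_pos (tri_map (hom_l psi) (pid (pconst T))) (th (f s))).
Proof. reflexivity. Qed.

Lemma mate_square_iff {q p q' p' : poly} {S S' : Type} (psi : pmap q q') (phi : pmap p p')
    (th : S -> pos (tri (hom q p) (pconst S))) (th' : S' -> pos (tri (hom q' p') (pconst S')))
    (f : S -> S') :
  (fun s => on_pos (tri_map (pid (hom q p')) (pconst_map f))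
             (on_pos (tri_map (hom_r phi) (pid (pconst S))) (th s)))
  = (fun s => on_pos (tri_map (hom_l psi) (pid (pconst S'))) (th' (f s)))
  <-> pcomp (tri_map phi (lin_map f)) (mate th) = pcomp (mate th') (tri_map (lin_map f) psi).
Proof.
  rewrite mate_natural_codomain, mate_natural_domain.
  split; [intros E; rewrite E; reflexivity | apply mate_inj].
Qed.

Lemma org_square_iff_eff_square {q p q' p' : poly} (psi : pmap q q') (phi : pmap p p')
    (c : coalg q p) (c' : coalg q' p') (f : st c -> st c') :
  org_square psi phi c c' f <-> eff_square psi phi (Fh c) (Fh c') (lin_map f).
Proof. exact (mate_square_iff psi phi (coal c) (coal c') f). Qed.

Definition pair_lin (S T : Type) : pmap (tri (plin S) (plin T)) (plin (S * T)) :=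
  PMap (tri (plin S) (plin T)) (plin (S * T))
    (fun x => (projT1 x, projT2 x tt)) (fun x _ => existT _ tt tt).

Definition unpair_lin (S T : Type) : pmap (plin (S * T)) (tri (plin S) (plin T)) :=
  PMap (plin (S * T)) (tri (plin S) (plin T))
    (fun st => existT (fun _ => unit -> T) (fst st) (fun _ => snd st)) (fun _ _ => tt).

Lemma pair_lin_invertible (S T : Type) : pinvertible (pair_lin S T).
Proof.
  exists (unpair_lin S T); split;
    (apply pmap_eq_of_on_pos; [prove_dir_subsingleton |]).
  - intros [s k]; simpl. f_equal.
    apply functional_extensionality; intros []; reflexivity.
  - intros [s t]; reflexivity.
Qed.

Lemma pair_lin_square {r q p : poly} (c1 : coalg q p) (c2 : coalg r q) :
  eff_square (pid r) (pid p) (eff_hcomp (Fh c1) (Fh c2)) (Fh (org_hcomp c1 c2))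
             (pair_lin (st c1) (st c2)).
Proof. apply pmap_ext; intros [[s1 k1] k2]; reflexivity. Qed.

Lemma unit_square (q : poly) :
  eff_square (pid q) (pid q) (eff_unit q) (Fh (org_unit q)) (pid py).
Proof. apply pmap_ext; intros [[] k]; reflexivity. Qed.

Definition org_to_eff : pdf_data :=
  PDF (fun _ _ _ _ _ _ _ _ f => lin_map f)
      (fun _ _ _ c1 c2 => pair_lin (st c1) (st c2))
      (fun _ => pid py).

(** The comparison cells are invertible globular squares, and all coherence
    laws are equalities of maps out of polynomials with subsingleton
    directions that agree on positions by computation. *)
Lemma org_to_eff_pseudo_double_functor : is_pseudo_double_functor org_to_eff.
Proof.
  unfold is_pseudo_double_functor.
  refine (conj _ (conj _ (conj _ (conj _ (conj _ (conj _ (conj _ (conj _ (conj _ _))))))))).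
  -
    intros q p q' p' psi phi c c' f. apply org_square_iff_eff_square.
  -
    reflexivity.
  -
    intros; apply pmap_eq_of_on_pos; [prove_dir_subsingleton | reflexivity].
  -
    intros; split; [apply pair_lin_square | apply pair_lin_invertible].
  -
    intros; split; [apply unit_square | exists (pid py); split; reflexivity].
  -
    intros; apply pmap_eq_of_on_pos; [prove_dir_subsingleton | reflexivity].
  -
    intros; apply pmap_eq_of_on_pos; [prove_dir_subsingleton | reflexivity].
  -
    intros; apply pmap_eq_of_on_pos; [prove_dir_subsingleton | reflexivity].
  -
    intros; apply pmap_eq_of_on_pos; [prove_dir_subsingleton | reflexivity].
  -
    intros; apply pmap_eq_of_on_pos; [prove_dir_subsingleton | reflexivity].
Qed.

(** Faithful since [lin_map f] remembers f; full since every map of linear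
    carriers is some [lin_map f], which is an Org-square by the correspondence. *)
Lemma org_to_eff_fully_faithful : fully_faithful_on_squares org_to_eff.
Proof.
  intros q p q' p' psi phi c c'. split.
  - intros f g _ _ E. exact (f_equal (fun m => on_pos m) E).
  - intros gm Hsq. exists (on_pos gm). simpl. split.
    + apply org_square_iff_eff_square. rewrite (lin_map_on_pos gm) in Hsq. exact Hsq.
    + symmetry. apply lin_map_on_pos.
Qed.

Definition coalg_of_linear {p q : poly} (h : handler p q) {S : Type}
    (b : pmap (car h) (plin S)) (b' : pmap (plin S) (car h)) : coalg q p :=
  Coalg S (unmate (pcomp (tri_map (pid p) b) (pcomp (hstr h) (tri_map b' (pid q))))).

Lemma coalg_of_linear_square {p q : poly} (h : handler p q) {S : Type}
    (b : pmap (car h) (plin S)) (b' : pmap (plin S) (car h)) :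
  pcomp b' b = pid (car h) ->
  eff_square (pid q) (pid p) (Fh (coalg_of_linear h b b')) h b'.
Proof.
  intro Hbb'. unfold eff_square.
  change (hstr (Fh (coalg_of_linear h b b')))
    with (mate (unmate (pcomp (tri_map (pid p) b) (pcomp (hstr h) (tri_map b' (pid q)))))).
  change (car (Fh (coalg_of_linear h b b'))) with (plin S).
  rewrite mate_unmate, pcomp_assoc, <- tri_map_comp, (pcomp_id_l (pid p)), Hbb', tri_map_id.
  apply pcomp_id_l.
Qed.

Lemma essential_image_iff_linear {p q : poly} (h : handler p q) :
  in_essential_image h <-> is_linear h.
Proof.
  split.
  - intros (q0 & p0 & c & psi & phi & a & _ & _ & _ & b & Hba & Hab).
    exists (st c), b, a. split; assumption.
  - intros (S & b & b' & Hb'b & Hbb').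
    exists q, p, (coalg_of_linear h b b'), (pid q), (pid p), b'.
    repeat split.
    + apply coalg_of_linear_square; exact Hb'b.
    + exists (pid q); split; reflexivity.
    + exists (pid p); split; reflexivity.
    + exists b; split; assumption.
Qed.

Theorem mainTheorem9 :
  (* the assignment on horizontal morphisms is the natural bijection *)
  (forall (q p : poly) (S : Type),
     exists inv : pmap (tri (plin S) q) (tri p (plin S)) -> (S -> pos (tri (hom q p) (pconst S))),
       (forall th, inv (transpose th) = th) /\ (forall g, transpose (inv g) = g))
  /\ exists F : pdf_data,
       is_pseudo_double_functor F
       /\ fully_faithful_on_squares F
       /\ (forall (p q : poly) (h : handler p q), in_essential_image h <-> is_linear h).
Proof.
  split.
  - intros q p S. exists unmate. split.
    + intro th. rewrite transpose_is_mate. apply unmate_mate.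
    + intro g. rewrite transpose_is_mate. apply mate_unmate.
  - exists org_to_eff. split; [| split].
    + exact org_to_eff_pseudo_double_functor.
    + exact org_to_eff_fully_faithful.
    + intros p q h. apply essential_image_iff_linear.
Qed.
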